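(* Let $(\mathbf k((G)),l)$ be a series field with prelogarithmic section, $\psi$ a morphism from $(\mathbf k((G)),l)$ to itself and $H$ a subgroup of $G$ such that $(\mathrm{Comp}_H)$: $\psi(h)=l(h)$ for every $h\in H$ with $l(h)\in G$. Then for every $h\in H$ with $l(h)\in G$ and every $k\in\mathbf k$: (1) $\psi^{EL}(\mathrm{Exp}(k\cdot h))=\mathrm{Exp}(k\cdot\mathrm{Log}(h))$; (2) if $\psi^{EL}$ is surjective, then $(\psi^{EL})^{-1}(\mathrm{Exp}(k\cdot\mathrm{Log}(h)))\in H\cdot\mathrm{Exp}\,\mathbf k((H^{>1}))$.
   Context: Let $\mathbf k$ be an ordered field with an order-preserving group isomorphism $\log:(\mathbf k^{>0},\cdot)\to(\mathbf k,+)$, and $(G,\cdot,<)$ a totally ordered abelian group (written multiplicatively). $\mathbf k((G))$ denotes the field of generalized power series $\alpha=\sum_{g\in G}\alpha(g)\,g$ ($\alpha(g)\in\mathbf k$) with anti-well-ordered support, usual operations, canonical valuation $v(\alpha)=\max\operatorname{supp}\alpha$ and ordering $\alpha>0$ iff $\alpha(v(\alpha))>0$; $\mathbf k$, $G$ are identified with subsets of $\mathbf k((G))$ (so ''$l(h)\in G$'' means $l(h)$ is a monomial with coefficient $1$). For $S\subseteq G$, $\mathbf k((S))=\{\alpha:\operatorname{supp}\alpha\subseteq S\}$; $H^{>1}=\{h\in H:h>1\}$. A prelogarithmic section is an order-preserving group embedding $l:(G,\cdot)\to(\mathbf k((G^{>1})),+)$. Exponential extension: $G^\#$ is the ordered abelian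 group of formal symbols $e(\alpha)$, $\alpha\in\mathbf k((G^{>1}))$, with $e(\alpha)e(\beta)=e(\alpha+\beta)$, $e(\alpha)<e(\beta)\iff\alpha<\beta$, and $e(l(g))$ identified with $g\in G$; $l^\#(e(\alpha))=\alpha$ is a prelogarithmic section of $\mathbf k((G^\#))$ extending $l$. Iterating gives $G^{\#n}$, $l^{\#n}$; the EL-series field $\mathbf k((G))^{EL}=\bigcup_n\mathbf k((G^{\#n}))$ carries the logarithm $\mathrm{Log}$ (union of the associated prelogarithms $L(g\,a(1+\varepsilon))=l(g)+\log a+\sum_{i\ge1}(-1)^{i-1}\varepsilon^i/i$), a bijection from positive elements onto the field, and $\mathrm{Exp}=\mathrm{Log}^{-1}$. An order-preserving group embedding $\psi:G\to G$, extended to $\mathbf k((G))$ by $\psi(\sum a_gg)=\sum a_g\psi(g)$, is a morphism of $(\mathbf k((G)),l)$ to itself if $\psi\circ l=l\circ\psi$ on $G$; it induces $\psi^\#=(l^\#)^{-1}\circ\psi\circ l^\#$ on $G^\#$, iterates $\psi^{\#n}$, and $\psi^{EL}=\bigcup_n\psi^{\#n}$. *)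

From HB Require Import structures.
From mathcomp Require Import all_boot all_order all_algebra.
From Stdlib Require Import Classical ClassicalEpsilon.
From Stdlib Require List.
Unset Printing Implicit Defensive.
Import Order.TTheory GRing.Theory Num.Theory.
Local Open Scope ring_scope.

Record oagroup := OAGroup {
  ocar :> Type;
  omul : ocar -> ocar -> ocar;
  oone : ocar;
  oinv : ocar -> ocar;
  olt : ocar -> ocar -> Prop;
  omulA : forall x y z, omul x (omul y z) = omul (omul x y) z;
  omulC : forall x y, omul x y = omul y x;
  omul1 : forall x, omul oone x = x;
  omulV : forall x, omul (oinv x) x = oone;
  olt_irr : forall x, ~ olt x x;
  olt_trans : forall x y z, olt x y -> olt y z -> olt x z;
  olt_total : forall x y, olt x y \/ x = y \/ olt y x;
  olt_mul : forall x y z, olt x y -> olt (omul x z) (omul y z)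
}.

(* Generic (raw) generalized power series over a monomial type T,
   i.e. functions T -> k; the conditions of being a series are predicates. *)

Definition supp (k : realFieldType) (T : Type) (a : T -> k) (x : T) : Prop := a x <> 0.

Definition antiwo (T : Type) (lt : T -> T -> Prop) (S : T -> Prop) : Prop :=
  forall X : T -> Prop, (forall x, X x -> S x) -> (exists x, X x) ->
  exists m, X m /\ forall x, X x -> x = m \/ lt x m.

Definition series_in (k : realFieldType) (T : Type) (lt : T -> T -> Prop)
  (S : T -> Prop) (a : T -> k) : Prop :=
  antiwo T lt (supp k T a) /\ forall x, a x <> 0 -> S x.

Definition spos (k : realFieldType) (T : Type) (lt : T -> T -> Prop) (a : T -> k) : Prop :=
  exists g, 0 < a g /\ forall x, lt g x -> a x = 0.

Definition mono (k : realFieldType) (T : Type) (g : T) : T -> k :=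
  fun x => if excluded_middle_informative (x = g) then 1 else 0.

(* sum of w over a (Prop-defined) set D, when D is finite; 0 otherwise *)
Definition fsum (k : realFieldType) (A : Type) (D : A -> Prop) (w : A -> k) : k :=
  match excluded_middle_informative
          (exists s : seq A, List.NoDup s /\ forall a, List.In a s <-> D a) with
  | left H => \sum_(a <- proj1_sig (constructive_indefinite_description _ H)) w a
  | right _ => 0
  end.

Definition smul (k : realFieldType) (T : Type) (mul : T -> T -> T) (a b : T -> k) : T -> k :=
  fun g => fsum k (T * T) (fun p : T * T => mul p.1 p.2 = g /\ a p.1 <> 0 /\ b p.2 <> 0)
                (fun p => a p.1 * b p.2).

Fixpoint spow (k : realFieldType) (T : Type) (mul : T -> T -> T) (one : T)
  (a : T -> k) (i : nat) : T -> k :=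
  match i with
  | 0 => mono k T one
  | i'.+1 => smul k T mul a (spow k T mul one a i')
  end.

Definition ssum (k : realFieldType) (T : Type) (f : nat -> T -> k) : T -> k :=
  fun g => fsum k nat (fun i => f i g <> 0) (fun i => f i g).

(* image of a series under a map of monomials: sum a_g g |-> sum a_g f(g)
   (f injective in all uses) *)
Definition push (k : realFieldType) (A B : Type) (f : A -> B) (a : A -> k) : B -> k :=
  fun b => match excluded_middle_informative (exists y, f y = b) with
           | left H => a (proj1_sig (constructive_indefinite_description _ H))
           | right _ => 0
           end.

(* leading monomial v(a) (max of support); junk value [one] if none *)
Definition lead (k : realFieldType) (T : Type) (lt : T -> T -> Prop) (one : T) (a : T -> k) : T :=
  match excluded_middle_informative
          (exists g, a g <> 0 /\ forall x, lt g x -> a x = 0) with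
  | left H => proj1_sig (constructive_indefinite_description _ H)
  | right _ => one
  end.

(* The logarithm associated to a prelogarithmic section lT:
   L(g a (1+eps)) = lT(g) + log a + sum_{i>=1} (-1)^(i-1) eps^i / i *)
Definition slog (k : realFieldType) (logk : k -> k) (T : Type)
  (lt : T -> T -> Prop) (mul : T -> T -> T) (one : T) (lT : T -> T -> k)
  (a : T -> k) : T -> k :=
  let g := lead k T lt one a in
  let c := a g in
  let eps : T -> k := fun x =>
      if excluded_middle_informative (x = one) then 0 else a (mul g x) / c in
  fun x => lT g x + logk c * mono k T one x
           + ssum k T (fun i y => ((-1) ^+ i / i.+1%:R) * spow k T mul one eps i.+1 y) x.

(* G^{#(n+1)} is the set of symbols e(alpha),
   alpha in k((G^{#n >1})); we represent e(alpha) by alpha itself, so the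
   carrier of level n+1 is (raw) Tn n -> k.  The identification of g in G^{#n}
   with e(l^{#n}(g)) is the embedding l^{#n} : Tn n -> Tn n.+1.              *)

Fixpoint Tn (k : realFieldType) (G : oagroup) (n : nat) : Type :=
  match n with 0 => ocar G | m.+1 => Tn k G m -> k end.

Fixpoint lt_n (k : realFieldType) (G : oagroup) (n : nat) : Tn k G n -> Tn k G n -> Prop :=
  match n return Tn k G n -> Tn k G n -> Prop with
  | 0 => @olt G
  | m.+1 => fun a b => spos k (Tn k G m) (lt_n k G m) (fun x => b x - a x)
  end.

Fixpoint mul_n (k : realFieldType) (G : oagroup) (n : nat) : Tn k G n -> Tn k G n -> Tn k G n :=
  match n return Tn k G n -> Tn k G n -> Tn k G n with
  | 0 => @omul G
  | m.+1 => fun a b x => a x + b x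
  end.

Fixpoint one_n (k : realFieldType) (G : oagroup) (n : nat) : Tn k G n :=
  match n return Tn k G n with
  | 0 => oone G
  | m.+1 => fun _ => 0
  end.

Fixpoint l_n (k : realFieldType) (G : oagroup) (l : G -> G -> k) (n : nat)
  : Tn k G n -> Tn k G n -> k :=
  match n return Tn k G n -> Tn k G n -> k with
  | 0 => l
  | m.+1 => fun a => push k (Tn k G m) (Tn k G m.+1) (l_n k G l m) a
  end.

(* psi^{#n} = (l^#)^{-1} o psi^{#(n-1)} o l^# *)
Fixpoint psi_n (k : realFieldType) (G : oagroup) (psi : G -> G) (n : nat)
  : Tn k G n -> Tn k G n :=
  match n return Tn k G n -> Tn k G n with
  | 0 => psi
  | m.+1 => fun a => push k (Tn k G m) (Tn k G m) (psi_n k G psi m) a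
  end.

Fixpoint validT (k : realFieldType) (G : oagroup) (n : nat) : Tn k G n -> Prop :=
  match n return Tn k G n -> Prop with
  | 0 => fun _ => True
  | m.+1 => fun a => series_in k (Tn k G m) (lt_n k G m)
                        (fun x => validT k G m x /\ lt_n k G m (one_n k G m) x) a
  end.

(* EL-series: elements of k((G^{#n})) for some n, up to the embeddings. *)

Definition EL (k : realFieldType) (G : oagroup) := {n : nat & Tn k G n -> k}.

Fixpoint liftup (k : realFieldType) (G : oagroup) (l : G -> G -> k) (n j : nat)
  : (Tn k G n -> k) -> (Tn k G (j + n)%N -> k) :=
  match j return (Tn k G n -> k) -> (Tn k G (j + n)%N -> k) with
  | 0 => fun a => a
  | j'.+1 => fun a => push k (Tn k G (j' + n)%N) (Tn k G (j' + n).+1) (l_n k G l (j' + n)%N) (liftup k G l n j' a)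
  end.

Definition liftto (k : realFieldType) (G : oagroup) (l : G -> G -> k) (n m : nat)
  (a : Tn k G n -> k) : Tn k G m -> k :=
  match (n <= m)%N as b return (n <= m)%N = b -> Tn k G m -> k with
  | true => fun H => eq_rect _ (fun p => Tn k G p -> k) (liftup k G l n (m - n)%N a) m (subnK H)
  | false => fun _ _ => 0
  end (erefl _).

Definition ELeq (k : realFieldType) (G : oagroup) (l : G -> G -> k) (x y : EL k G) : Prop :=
  exists m, (projT1 x <= m)%N /\ (projT1 y <= m)%N /\
    forall t, liftto k G l (projT1 x) m (projT2 x) t = liftto k G l (projT1 y) m (projT2 y) t.

Definition ELvalid (k : realFieldType) (G : oagroup) (x : EL k G) : Prop :=
  series_in k (Tn k G (projT1 x)) (lt_n k G (projT1 x)) (validT k G (projT1 x)) (projT2 x).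

Definition ELpos (k : realFieldType) (G : oagroup) (x : EL k G) : Prop :=
  spos k (Tn k G (projT1 x)) (lt_n k G (projT1 x)) (projT2 x).

Definition ELscale (k : realFieldType) (G : oagroup) (c : k) (x : EL k G) : EL k G :=
  existT _ (projT1 x) (fun t => c * projT2 x t).

Definition ELmul (k : realFieldType) (G : oagroup) (l : G -> G -> k) (x y : EL k G) : EL k G :=
  let m := maxn (projT1 x) (projT1 y) in
  existT _ m (smul k (Tn k G m) (mul_n k G m) (liftto k G l (projT1 x) m (projT2 x))
                                    (liftto k G l (projT1 y) m (projT2 y))).

Definition ELof0 (k : realFieldType) (G : oagroup) (a : G -> k) : EL k G :=
  existT (fun n => Tn k G n -> k) 0%N a.

Definition ELLog (k : realFieldType) (G : oagroup) (l : G -> G -> k) (logk : k -> k)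
  (x : EL k G) : EL k G :=
  existT _ (projT1 x)
    (slog k logk (Tn k G (projT1 x)) (lt_n k G (projT1 x)) (mul_n k G (projT1 x)) (one_n k G (projT1 x))
          (l_n k G l (projT1 x)) (projT2 x)).

Definition ELExp (k : realFieldType) (G : oagroup) (l : G -> G -> k) (logk : k -> k)
  (b : EL k G) : EL k G :=
  match excluded_middle_informative
          (exists y, ELvalid k G y /\ ELpos k G y /\ ELeq k G l (ELLog k G l logk y) b) with
  | left H => proj1_sig (constructive_indefinite_description _ H)
  | right _ => ELof0 k G (fun _ : G => 0)
  end.

Definition ELpsi (k : realFieldType) (G : oagroup) (psi : G -> G) (x : EL k G) : EL k G :=
  existT _ (projT1 x) (push k (Tn k G (projT1 x)) (Tn k G (projT1 x)) (psi_n k G psi (projT1 x)) (projT2 x)).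

Definition is_log (k : realFieldType) (logk : k -> k) : Prop :=
  (forall a b, 0 < a -> 0 < b -> logk (a * b) = logk a + logk b) /\
  (forall a b, 0 < a -> a < b -> logk a < logk b) /\
  (forall c, exists a, 0 < a /\ logk a = c).

Definition prelog_section (k : realFieldType) (G : oagroup) (l : G -> G -> k) : Prop :=
  (forall g, series_in k G (olt G) (fun x => olt G (oone G) x) (l g)) /\
  (forall g h x, l (omul G g h) x = l g x + l h x) /\
  (forall g h, olt G g h -> spos k G (olt G) (fun x => l h x - l g x)).

Definition morphism_l (k : realFieldType) (G : oagroup) (l : G -> G -> k) (psi : G -> G) : Prop :=
  (forall g h, psi (omul G g h) = omul G (psi g) (psi h)) /\
  (forall g h, olt G g h -> olt G (psi g) (psi h)) /\
  (forall g x, l (psi g) x = push k G G psi (l g) x).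

Definition subgroup (G : oagroup) (H : G -> Prop) : Prop :=
  H (oone G) /\ (forall g h, H g -> H h -> H (omul G g h)) /\ (forall g, H g -> H (oinv G g)).

(* "l(h) in G" : l(h) is a monomial with coefficient 1 *)
Definition l_in_G (k : realFieldType) (G : oagroup) (l : G -> G -> k) (h : G) : Prop :=
  exists m : G, forall x, l h x = mono k G m x.

(* Let h in H with l(h) a monomial.  By (Comp_H), l(h) = psi(h); since l(h) is a
   positive infinitely large monomial and psi is an order-preserving embedding
   fixing 1, also h > 1, and Log(h) = l(h) = psi(h).  The heart of the proof is
   a description of Exp on monomials: for every monomial m > 1 of G and c in k,
   Exp(c m) is the single monomial e(c m) of G^#.  Existence is the computation
   Log(e(c m)) = l^#(e(c m)) = c m.  Uniqueness says that a positive series y of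
   k((G^{#n})) whose logarithm is a monomial term c M, M > 1, is a monomial: in
   L(y) = l(v(y)) + log a + sum_i (-1)^(i-1) eps^i/i the coefficient at 1 forces
   a = 1, the coefficients below 1 force the tail series to vanish, and then the
   leading term of the tail (which is that of eps) forces eps = 0.
   Hence Exp(c h) = e(c h) and Exp(c Log h) = e(c psi(h)) = psi^#(e(c h)): this
   is (1).  As psi^EL is injective, any preimage of Exp(c Log h) equals
   e(c h) = 1 . Exp(c h), where c h lies in k((H^{>1})): this is (2). *)

From mathcomp Require Import all_boot all_order all_algebra.
From Stdlib Require Import Classical ClassicalEpsilon FunctionalExtensionality.
From Stdlib Require List.
Unset Printing Implicit Defensive.
Import Order.TTheory GRing.Theory Num.Theory.
Local Open Scope ring_scope.

Section SeriesToolkit.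
Context {k : realFieldType}.

Lemma fsum_ne0 {A : Type} (D : A -> Prop) (w : A -> k) :
  fsum k A D w <> 0 -> exists a, D a /\ w a <> 0.
Proof.
rewrite /fsum; case: excluded_middle_informative => [H|_]; last by [].
case: (constructive_indefinite_description _ H) => s [_ Hs] /= Hsum.
suff [a [/Hs Da wa]] : exists a, List.In a s /\ w a <> 0 by exists a.
elim: s {Hs} Hsum => [|a s IH]; first by rewrite big_nil.
rewrite big_cons; case: (classic (w a = 0)) => [wa|wa _]; last by exists a; split; first left.
rewrite wa add0r => /IH [b [sb wb]]; by exists b; split; first right.
Qed.

Lemma fsum0 {A : Type} (D : A -> Prop) (w : A -> k) :
  (forall a, ~ D a) -> fsum k A D w = 0.
Proof.
by move=> nD; apply: NNPP => /fsum_ne0 [a [/nD]].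
Qed.

Lemma fsum1 {A : Type} (D : A -> Prop) (w : A -> k) a0 :
  (forall a, D a <-> a = a0) -> fsum k A D w = w a0.
Proof.
move=> HD; rewrite /fsum; case: excluded_middle_informative => [H|H]; last first.
  exfalso; apply: H; exists [:: a0]; split.
    by constructor; [case | constructor].
  by move=> a; rewrite HD /=; split; [case=> // -> | move=> ->; left].
case: (constructive_indefinite_description _ H) => s [nd Hs] /=.
have Hin a : List.In a s <-> a = a0 by rewrite Hs HD.
case: s nd Hin {Hs} => [|x s] nd Hin; first by have := proj2 (Hin a0) erefl.
have xa : x = a0 by apply/Hin; left.
subst x.
case: s nd Hin => [|y s] nd Hin; first by rewrite big_cons big_nil addr0.
have ya : y = a0 by apply/Hin; right; left.
by subst y; inversion nd as [|? ? Hn]; case: Hn; left.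
Qed.

Lemma mono_ne0 {T : Type} (g x : T) : mono k T g x <> 0 -> x = g.
Proof. by rewrite /mono; case: excluded_middle_informative. Qed.

Lemma mono_eq {T : Type} (g : T) : mono k T g g = 1.
Proof. by rewrite /mono; case: excluded_middle_informative. Qed.

Lemma mono_neq {T : Type} (g x : T) : x <> g -> mono k T g x = 0.
Proof. by rewrite /mono; case: excluded_middle_informative. Qed.

Lemma mono_self_ne0 {T : Type} (g : T) : mono k T g g <> 0.
Proof. by rewrite mono_eq; apply/eqP; exact: oner_neq0. Qed.

Lemma smono_ne0 {T : Type} (c : k) (g x : T) : c * mono k T g x <> 0 -> x = g.
Proof. by move=> H; apply: mono_ne0 => e; apply: H; rewrite e mulr0. Qed.

Lemma push_at {A B : Type} (f : A -> B) (a : A -> k) (x : A) :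
  injective f -> push k A B f a (f x) = a x.
Proof.
move=> fi; rewrite /push; case: excluded_middle_informative => [H|H]; last by case: H; exists x.
by case: (constructive_indefinite_description _ H) => y /= /fi ->.
Qed.

Lemma push_out {A B : Type} (f : A -> B) (a : A -> k) (b : B) :
  (forall y, f y <> b) -> push k A B f a b = 0.
Proof.
move=> H; rewrite /push; case: excluded_middle_informative => [[y Hy]|//].
by case: (H y).
Qed.

Lemma range_cases {A B : Type} (f : A -> B) (b : B) :
  (exists y, b = f y) \/ (forall y, f y <> b).
Proof.
case: (classic (exists y, f y = b)) => [[y <-]|H]; first by left; exists y.
by right => y Hy; apply: H; exists y.
Qed.

Lemma push_ne0 {A B : Type} {f : A -> B} {a : A -> k} {b : B} :
  injective f -> push k A B f a b <> 0 -> exists y, b = f y /\ a y <> 0.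
Proof.
move=> fi; case: (range_cases f b) => [[y ->]|H]; last by rewrite push_out.
by rewrite push_at // => ?; exists y.
Qed.

Lemma push_smono {A B : Type} (f : A -> B) (c : k) z :
  injective f -> push k A B f (fun x => c * mono k A z x) = (fun x => c * mono k B (f z) x).
Proof.
move=> fi; apply: functional_extensionality => b.
case: (range_cases f b) => [[y ->]|H].
  rewrite push_at //; case: (classic (y = z)) => [->|ne]; first by rewrite !mono_eq.
  by rewrite !mono_neq // => /fi.
by rewrite push_out // mono_neq ?mulr0 // => e; case: (H z).
Qed.

Lemma push_mono {A B : Type} (f : A -> B) z :
  injective f -> push k A B f (mono k A z) = mono k B (f z).
Proof.
move=> fi; have := push_smono f 1 z fi.
have one_mul (T : Type) (g : T) : (fun x => 1 * mono k T g x) = mono k T g.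
  by apply: functional_extensionality => x; rewrite mul1r.
by rewrite !one_mul.
Qed.

Lemma push_inj {A B : Type} {f : A -> B} : injective f -> injective (push k A B f).
Proof.
move=> fi a a' E; apply: functional_extensionality => x.
by rewrite -(push_at f a x fi) -(push_at f a' x fi) E.
Qed.

Lemma push_comp {A B C : Type} (f : B -> C) (g : A -> B) (a : A -> k) :
  injective f -> injective g ->
  push k B C f (push k A B g a) = push k A C (fun x => f (g x)) a.
Proof.
move=> fi gi; have fgi : injective (fun x => f (g x)) by move=> x y /fi /gi.
apply: functional_extensionality => c.
case: (range_cases (fun x => f (g x)) c) => [[y ->]|H].
  by rewrite (push_at f) // (push_at g) // (push_at (fun x => f (g x))).
rewrite (push_out _ _ _ H); case: (range_cases f c) => [[y Ey]|H2]; last by rewrite push_out.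
rewrite Ey push_at //; case: (range_cases g y) => [[z Hz]|H3]; last by rewrite push_out.
by case: (H z); rewrite Ey Hz.
Qed.

Lemma smul_ne0 {T : Type} {mul : T -> T -> T} {a b : T -> k} {z : T} :
  smul k T mul a b z <> 0 -> exists p1 p2, mul p1 p2 = z /\ a p1 <> 0 /\ b p2 <> 0.
Proof. by move=> /fsum_ne0 [[p1 p2] [[/= e [h1 h2]] _]]; exists p1, p2. Qed.

Lemma smul_mono1l {T : Type} mul (one : T) (b : T -> k) :
  (forall x, mul one x = x) -> smul k T mul (mono k T one) b = b.
Proof.
move=> mul1x; apply: functional_extensionality => z; rewrite /smul.
case: (classic (b z = 0)) => bz.
  rewrite bz; apply: fsum0 => [[p1 p2]] /= [e [h1 h2]].
  by rewrite (mono_ne0 _ _ h1) mul1x in e; subst p2.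
rewrite (fsum1 _ _ (one, z)) /= ?mono_eq ?mul1r // => -[p1 p2] /=; split.
  by case=> e [h1 _]; have e1 := mono_ne0 _ _ h1; subst p1; rewrite mul1x in e; subst p2.
by case=> -> ->; split; [exact: mul1x | split; first exact: mono_self_ne0].
Qed.

Lemma smul_mono1r {T : Type} mul (one : T) (a : T -> k) :
  (forall x, mul x one = x) -> smul k T mul a (mono k T one) = a.
Proof.
move=> mulx1; apply: functional_extensionality => z; rewrite /smul.
case: (classic (a z = 0)) => az.
  rewrite az; apply: fsum0 => [[p1 p2]] /= [e [h1 h2]].
  by rewrite (mono_ne0 _ _ h2) mulx1 in e; subst p1.
rewrite (fsum1 _ _ (z, one)) /= ?mono_eq ?mulr1 // => -[p1 p2] /=; split.
  by case=> e [_ h2]; have e2 := mono_ne0 _ _ h2; subst p2; rewrite mulx1 in e; subst p1.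
by case=> -> ->; split; [exact: mulx1 | split; last exact: mono_self_ne0].
Qed.

Lemma spow_zero {T : Type} mul one (eps : T -> k) :
  (forall x, eps x = 0) -> forall j z, spow k T mul one eps j.+1 z = 0.
Proof.
move=> eps0 j z; apply: NNPP => H.
by have [p1 [p2 [_ [/(_ (eps0 p1))]]]] := smul_ne0 H.
Qed.

Lemma ssum_ne0 {T : Type} {f : nat -> T -> k} {z : T} :
  ssum k T f z <> 0 -> exists i, f i z <> 0.
Proof. by move=> /fsum_ne0 [i [h _]]; exists i. Qed.

End SeriesToolkit.

Section AntiWellOrdered.
Context {T : Type}.

Definition strict_total_on (W : T -> Prop) (lt : T -> T -> Prop) : Prop :=
  (forall x y z, W x -> W y -> W z -> lt x y -> lt y z -> lt x z) /\
  (forall x y, W x -> W y -> x <> y -> lt x y \/ lt y x).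

Lemma le_trans_on {W : T -> Prop} {lt : T -> T -> Prop} {x y z : T} :
  strict_total_on W lt -> W x -> W y -> W z ->
  x = y \/ lt x y -> y = z \/ lt y z -> x = z \/ lt x z.
Proof.
move=> [tr _] Wx Wy Wz [->|lxy] [<-|lyz]; auto.
by right; apply: (tr x y z).
Qed.

Lemma antiwo_sub {lt : T -> T -> Prop} {S S' : T -> Prop} :
  antiwo T lt S -> (forall x, S' x -> S x) -> antiwo T lt S'.
Proof. by move=> H sub X HX; apply: H => x /HX /sub. Qed.

Lemma antiwo_single (lt : T -> T -> Prop) (S : T -> Prop) z :
  (forall x, S x -> x = z) -> antiwo T lt S.
Proof.
move=> H X HX [x0 Xx0]; exists x0; split => // x Xx; left.
by rewrite (H _ (HX _ Xx)) (H _ (HX _ Xx0)).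
Qed.

(* The union of two anti-well-ordered subsets of a linearly ordered set is
   anti-well-ordered: the larger of the two partial maxima is a maximum. *)
Lemma antiwo_union (lt : T -> T -> Prop) (W S1 S2 : T -> Prop) :
  strict_total_on W lt -> (forall x, S1 x -> W x) -> (forall x, S2 x -> W x) ->
  antiwo T lt S1 -> antiwo T lt S2 -> antiwo T lt (fun x => S1 x \/ S2 x).
Proof.
move=> ord W1 W2 A1 A2 X HX [x0 Xx0].
case: (classic (exists x, X x /\ S1 x)) => [E1|N1]; last first.
  apply: A2 => [x Xx|]; last by exists x0.
  by case: (HX x Xx) => // s1; case: N1; exists x.
case: (classic (exists x, X x /\ S2 x)) => [E2|N2]; last first.
  apply: A1 => [x Xx|]; last by exists x0.
  by case: (HX x Xx) => // s2; case: N2; exists x.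
have [m1 [[Xm1 S1m1] M1]] := A1 (fun x => X x /\ S1 x) (fun x h => proj2 h) E1.
have [m2 [[Xm2 S2m2] M2]] := A2 (fun x => X x /\ S2 x) (fun x h => proj2 h) E2.
have bound m : X m -> W m -> m1 = m \/ lt m1 m -> m2 = m \/ lt m2 m ->
    exists m, X m /\ (forall x, X x -> x = m \/ lt x m).
  move=> Xm Wm le1 le2; exists m; split => // x Xx.
  case: (HX x Xx) => Sx.
    exact: (le_trans_on ord (W1 _ Sx) (W1 _ S1m1) Wm (M1 x (conj Xx Sx)) le1).
  exact: (le_trans_on ord (W2 _ Sx) (W2 _ S2m2) Wm (M2 x (conj Xx Sx)) le2).
case: (classic (m1 = m2)) => [e|ne]; first by apply: (bound m1); auto.
case: ((proj2 ord) m1 m2 (W1 _ S1m1) (W2 _ S2m2) ne) => l.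
  by apply: (bound m2); auto.
by apply: (bound m1); auto.
Qed.

Lemma antiwo_max {k : realFieldType} (lt : T -> T -> Prop) (a : T -> k) :
  antiwo T lt (supp k T a) -> (exists x, a x <> 0) ->
  exists w, a w <> 0 /\ forall x, a x <> 0 -> x = w \/ lt x w.
Proof.
move=> A [x0 H0]; have [m [Hm M]] := A (supp k T a) (fun x h => h) (ex_intro _ x0 H0).
by exists m.
Qed.

Lemma max_above {k : realFieldType} (lt : T -> T -> Prop) (W : T -> Prop) (a : T -> k) w :
  (forall x, ~ lt x x) ->
  (forall x y z, W x -> W y -> W z -> lt x y -> lt y z -> lt x z) ->
  (forall x, a x <> 0 -> W x) -> (forall x, a x <> 0 -> x = w \/ lt x w) -> W w ->
  forall x, lt w x -> a x = 0.
Proof.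
move=> irr tr Wa M Ww x lwx; apply: NNPP => ax.
case: (M x ax) => [e|lxw]; first by rewrite e in lwx; case: (irr w lwx).
by case: (irr x); apply: (tr x w x) => //; apply: Wa.
Qed.

End AntiWellOrdered.

Section TowerGroup.
Context {k : realFieldType} {G : oagroup}.

Fixpoint inv_n (n : nat) : Tn k G n -> Tn k G n :=
  match n return Tn k G n -> Tn k G n with
  | 0 => @oinv G
  | m.+1 => fun a x => - a x
  end.

Lemma mul_nC {n} (x y : Tn k G n) : mul_n k G n x y = mul_n k G n y x.
Proof.
case: n x y => [|n] x y /=; first exact: omulC.
by apply: functional_extensionality => t; rewrite addrC.
Qed.

Lemma mul_nA {n} (x y z : Tn k G n) :
  mul_n k G n x (mul_n k G n y z) = mul_n k G n (mul_n k G n x y) z.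
Proof.
case: n x y z => [|n] x y z /=; first exact: omulA.
by apply: functional_extensionality => t; rewrite addrA.
Qed.

Lemma mul_1n {n} (x : Tn k G n) : mul_n k G n (one_n k G n) x = x.
Proof.
case: n x => [|n] x /=; first exact: omul1.
by apply: functional_extensionality => t; rewrite add0r.
Qed.

Lemma mul_n1 {n} (x : Tn k G n) : mul_n k G n x (one_n k G n) = x.
Proof. by rewrite mul_nC mul_1n. Qed.

Lemma mul_Vn {n} (x : Tn k G n) : mul_n k G n (inv_n n x) x = one_n k G n.
Proof.
case: n x => [|n] x /=; first exact: omulV.
by apply: functional_extensionality => t; rewrite addNr.
Qed.

Lemma mul_nV {n} (x : Tn k G n) : mul_n k G n x (inv_n n x) = one_n k G n.
Proof. by rewrite mul_nC mul_Vn. Qed.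

Lemma mul_nK {n} (g x : Tn k G n) : mul_n k G n (inv_n n g) (mul_n k G n g x) = x.
Proof. by rewrite mul_nA mul_Vn mul_1n. Qed.

Lemma mul_n_inj {n} (g : Tn k G n) : injective (mul_n k G n g).
Proof. by move=> x y E; rewrite -(mul_nK g x) E mul_nK. Qed.

Lemma mul_n_eqg {n} (g x : Tn k G n) : mul_n k G n g x = g -> x = one_n k G n.
Proof. by move=> E; apply: (mul_n_inj g); rewrite E mul_n1. Qed.

Lemma lt_n_irr {n} (x : Tn k G n) : ~ lt_n k G n x x.
Proof.
case: n x => [|n] x /=; first exact: olt_irr.
by case=> g []; rewrite subrr ltxx.
Qed.

Lemma lt_n_mul {n} (x y z : Tn k G n) :
  lt_n k G n x y -> lt_n k G n (mul_n k G n x z) (mul_n k G n y z).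
Proof.
case: n x y z => [|n] x y z /=; first exact: olt_mul.
have -> : (fun t => y t + z t - (x t + z t)) = (fun t => y t - x t) :> (Tn k G n -> k).
  by apply: functional_extensionality => t; rewrite opprD addrACA subrr addr0.
by [].
Qed.

Lemma lt_n_mul_l {n} (z x y : Tn k G n) :
  lt_n k G n x y -> lt_n k G n (mul_n k G n z x) (mul_n k G n z y).
Proof. by rewrite ![mul_n _ _ _ z _]mul_nC; apply: lt_n_mul. Qed.

Lemma lt_n_mul_lK {n} (z x y : Tn k G n) :
  lt_n k G n (mul_n k G n z x) (mul_n k G n z y) -> lt_n k G n x y.
Proof. by move=> /(lt_n_mul_l (inv_n n z)); rewrite !mul_nK. Qed.

End TowerGroup.

Section SuccessorLevel.
Context {k : realFieldType} {G : oagroup}.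
Variable n : nat.
Hypothesis ord_n : strict_total_on (validT k G n) (lt_n k G n).

Local Notation V := (validT k G n).
Local Notation VS := (validT k G n.+1).
Local Notation lt := (lt_n k G n).

Lemma validS_supp {a : Tn k G n.+1} {x : Tn k G n} : VS a -> a x <> 0 -> V x /\ lt (one_n k G n) x.
Proof. by case=> _ Ha /Ha. Qed.

Lemma validS_add {a b : Tn k G n.+1} : VS a -> VS b -> VS (fun x => a x + b x).
Proof.
move=> va vb; have [Aa Ha] := va; have [Ab Hb] := vb.
have ab_supp x : a x + b x <> 0 -> a x <> 0 \/ b x <> 0.
  by move=> H; apply: NNPP => /not_or_and [/NNPP a0 /NNPP b0]; apply: H; rewrite a0 b0 addr0.
split.
  apply: (@antiwo_sub _ lt (fun x => supp k _ a x \/ supp k _ b x)); last exact: ab_supp.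
  apply: (@antiwo_union _ lt V) => // x Sx.
    exact: (proj1 (validS_supp va Sx)).
  exact: (proj1 (validS_supp vb Sx)).
by move=> x /ab_supp [/Ha|/Hb].
Qed.

Lemma validS_opp {a : Tn k G n.+1} : VS a -> VS (fun x => - a x).
Proof.
have opp_ne0 x : - a x <> 0 -> a x <> 0 by move=> H e; apply: H; rewrite e oppr0.
case=> Aa Ha; split; first by apply: (antiwo_sub Aa) => x /opp_ne0.
by move=> x /opp_ne0 /Ha.
Qed.

Lemma validS_diff_lead {a b : Tn k G n.+1} : VS a -> VS b -> (exists x, b x - a x <> 0) ->
  exists w, b w - a w <> 0 /\ V w /\ forall x, lt w x -> b x - a x = 0.
Proof.
move=> va vb ex; have [A H] := validS_add vb (validS_opp va).
have [w [Hw M]] := antiwo_max lt _ A ex.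
have Vw : V w by case: (H w Hw).
exists w; split => //; split => //.
apply: (@max_above _ _ lt V) => //; first exact: lt_n_irr.
- exact: (proj1 ord_n).
- by move=> x /H [].
Qed.

Lemma ltS_trans (a b c : Tn k G n.+1) : VS a -> VS b -> VS c ->
  lt_n k G n.+1 a b -> lt_n k G n.+1 b c -> lt_n k G n.+1 a c.
Proof.
move=> va vb vc [w1 [p1 z1]] [w2 [p2 z2]].
have Vdiff (u v : Tn k G n.+1) x : VS u -> VS v -> v x - u x <> 0 -> V x.
  by move=> vu vv /(validS_supp (validS_add vv (validS_opp vu))) [].
have Vw1 : V w1 by apply: (Vdiff a b) => // e; rewrite e ltxx in p1.
have Vw2 : V w2 by apply: (Vdiff b c) => // e; rewrite e ltxx in p2.
have split_diff x : c x - a x = (c x - b x) + (b x - a x) by rewrite addrA subrK.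
case: (classic (w1 = w2)) => [e|ne].
  subst w2; exists w1; split; first by rewrite split_diff addr_gt0.
  by move=> x lx; rewrite split_diff z1 // z2 // addr0.
have [tr to] := ord_n.
case: (to w1 w2 Vw1 Vw2 ne) => l12.
  exists w2; split; first by rewrite split_diff z1 // addr0.
  move=> x lx; rewrite split_diff z2 // add0r; apply: NNPP => dx.
  have Vx := Vdiff a b x va vb dx.
  by apply: dx; apply: z1; apply: (tr w1 w2 x Vw1 Vw2 Vx).
exists w1; split; first by rewrite split_diff z2 // add0r.
move=> x lx; rewrite split_diff z1 // addr0; apply: NNPP => dx.
have Vx := Vdiff b c x vb vc dx.
by apply: dx; apply: z2; apply: (tr w2 w1 x Vw2 Vw1 Vx).
Qed.

Lemma ltS_total (a b : Tn k G n.+1) : VS a -> VS b -> a <> b ->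
  lt_n k G n.+1 a b \/ lt_n k G n.+1 b a.
Proof.
move=> va vb ne.
have ex : exists x, b x - a x <> 0.
  apply: NNPP => H; apply: ne; apply: functional_extensionality => x.
  by apply/eqP; rewrite eq_sym -subr_eq0; apply/eqP; apply: NNPP => h; apply: H; exists x.
have [w [Hw [_ M]]] := validS_diff_lead va vb ex.
case: (ltrgtP (b w - a w) 0) => hw //; last by left; exists w.
right; exists w; split; first by rewrite -opprB oppr_gt0.
by move=> x /M e; rewrite -opprB e oppr0.
Qed.

End SuccessorLevel.

Section TowerOrder.
Context {k : realFieldType} {G : oagroup}.

Lemma tower_order n : strict_total_on (validT k G n) (lt_n k G n).
Proof.
elim: n => [|n IH].
  split; first by move=> x y z _ _ _; apply: olt_trans.
  by move=> x y _ _ ne; case: (@olt_total G x y) => [|[]]; auto.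
split; [exact: ltS_trans | exact: ltS_total].
Qed.

Lemma lt_n_trans {n} {x y z : Tn k G n} : validT k G n x -> validT k G n y -> validT k G n z ->
  lt_n k G n x y -> lt_n k G n y z -> lt_n k G n x z.
Proof. exact: (proj1 (tower_order n)). Qed.

Lemma lt_n_total {n} {x y : Tn k G n} : validT k G n x -> validT k G n y -> x <> y ->
  lt_n k G n x y \/ lt_n k G n y x.
Proof. exact: (proj2 (tower_order n)). Qed.

Lemma valid_one {n} : validT k G n (one_n k G n).
Proof. by case: n => [|n] //=; split => [X HX [x /HX]|x]. Qed.

Lemma valid_mul {n} {x y : Tn k G n} :
  validT k G n x -> validT k G n y -> validT k G n (mul_n k G n x y).
Proof. by case: n x y => [|n] x y //; apply: validS_add; apply: tower_order. Qed.

Lemma valid_inv {n} {x : Tn k G n} : validT k G n x -> validT k G n (inv_n n x).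
Proof. by case: n x => [|n] x //; apply: validS_opp. Qed.

End TowerOrder.

Section PushOrder.
Context {k : realFieldType} {A B : Type}.
Variables (ltA : A -> A -> Prop) (ltB : B -> B -> Prop).
Variables (WA : A -> Prop) (WB : B -> Prop) (f : A -> B).
Hypothesis f_inj : injective f.
Hypothesis f_valid : forall x, WA x -> WB (f x).
Hypothesis f_lt : forall x y, WA x -> WA y -> ltA x y -> ltB (f x) (f y).

Lemma push_antiwo (a : A -> k) : (forall x, a x <> 0 -> WA x) ->
  antiwo A ltA (supp k A a) -> antiwo B ltB (supp k B (push k A B f a)).
Proof.
move=> Wa Aa X HX [x0 Xx0].
have supp_push y : X (f y) -> a y <> 0 by move/HX; rewrite /supp push_at.
have [y0 [e0 _]] := push_ne0 f_inj (HX x0 Xx0); subst x0.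
have [m [Xm M]] := Aa (fun y => X (f y)) supp_push (ex_intro _ y0 Xx0).
exists (f m); split => // t Xt.
have [y [ey ay]] := push_ne0 f_inj (HX t Xt); subst t.
case: (M y Xt) => [->|lym]; [by left | right].
by apply: f_lt => //; apply: Wa => //; apply: supp_push.
Qed.

Lemma push_spos (a b : A -> k) :
  strict_total_on WA ltA -> strict_total_on WB ltB -> (forall x, ~ ltB x x) ->
  (forall x, b x - a x <> 0 -> WA x) ->
  spos k A ltA (fun x => b x - a x) ->
  spos k B ltB (fun t => push k A B f b t - push k A B f a t).
Proof.
move=> [_ totA] [trB _] irrB Wd [w [pw zw]].
have Ww : WA w by apply: Wd => e; rewrite e ltxx in pw.
exists (f w); split; first by rewrite !push_at.
move=> t lwt; case: (range_cases f t) => [[y ey]|out]; last by rewrite !push_out // subrr.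
subst t; rewrite !push_at //; apply: NNPP => dy; have Wy := Wd y dy.
case: (classic (y = w)) => [e|ne]; first by subst; case: (irrB _ lwt).
case: (totA y w Wy Ww ne) => [lyw|lwy]; last by case: dy; apply: zw.
have [fVy fVw] := (f_valid _ Wy, f_valid _ Ww).
by case: (irrB (f y)); apply: (trB _ (f w) _ fVy fVw fVy (f_lt _ _ Wy Ww lyw) lwt).
Qed.

End PushOrder.

Section Lifts.
Context {k : realFieldType} {G : oagroup}.
Variable l : G -> G -> k.

Lemma liftto_eq {n m : nat} (H : (n <= m)%N) a :
  liftto k G l n m a = eq_rect _ (fun p => Tn k G p -> k) (liftup k G l n (m - n) a) m (subnK H).
Proof.
rewrite /liftto; generalize (erefl (n <= m)%N); generalize (n <= m)%N at 2 3.
case=> e; last by rewrite H in e.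
by rewrite (eq_irrelevance e H).
Qed.

Lemma cast_liftup n i j (e : (i + n = j + n)%N) a :
  eq_rect _ (fun p => Tn k G p -> k) (liftup k G l n i a) _ e = liftup k G l n j a.
Proof.
have ij : i = j by apply/eqP; rewrite -(eqn_add2r n); apply/eqP.
by subst j; rewrite (eq_irrelevance e erefl).
Qed.

Lemma liftto_add n j a : liftto k G l n (j + n) a = liftup k G l n j a.
Proof. by rewrite (liftto_eq (leq_addl j n)) cast_liftup. Qed.

Lemma liftto_refl n a : liftto k G l n n a = a.
Proof. exact: (liftto_add n 0 a). Qed.

Lemma liftto_S n m a :
  (n <= m)%N -> liftto k G l n m.+1 a = push k _ _ (l_n k G l m) (liftto k G l n m a).
Proof.
move=> H; have [j ->] : exists j, m = (j + n)%N by exists (m - n)%N; rewrite subnK.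
by rewrite liftto_add (liftto_add n j.+1).
Qed.

Lemma liftto_trans {n m m' : nat} a : (n <= m)%N -> (m <= m')%N ->
  liftto k G l n m' a = liftto k G l m m' (liftto k G l n m a).
Proof.
move=> nm; elim: m' => [|m' IH] mm'.
  by move: mm'; rewrite leqn0 => /eqP E; subst m; rewrite liftto_refl.
case: (ltngtP m m'.+1) mm' => // [lt _|-> _]; last by rewrite liftto_refl.
by rewrite liftto_S ?(leq_trans nm) // liftto_S // IH.
Qed.

End Lifts.

Section Embeddings.
Context {k : realFieldType} {G : oagroup}.
Variable l : G -> G -> k.
Hypothesis hl : prelog_section k G l.

Lemma l_n_inj n : injective (l_n k G l n).
Proof.
have [_ [_ hl3]] := hl; elim: n => [|n IH] /=; last exact: push_inj.
have lt_ne g h : olt G g h -> l g <> l h.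
  by move=> /hl3 [w [p _]] E; rewrite E subrr ltxx in p.
by move=> g h E; case: (@olt_total G g h) => [/lt_ne/(_ E)|[//|/lt_ne/(_ (esym E))]].
Qed.

Lemma l_n_one n : l_n k G l n (one_n k G n) = one_n k G n.+1.
Proof.
case: n => [|n] /=; apply: functional_extensionality => x.
  have [_ [hl2 _]] := hl; have := hl2 (oone G) (oone G) x.
  by rewrite omul1 => /(congr1 (fun t => t - l (oone G) x)); rewrite subrr addrK.
case: (range_cases (l_n k G l n) x) => [[y ->]|H]; last by rewrite push_out.
by rewrite push_at //; apply: l_n_inj.
Qed.

Lemma liftto_inj {n m : nat} : (n <= m)%N -> injective (liftto k G l n m).
Proof.
elim: m => [|m IH].
  by rewrite leqn0 => /eqP E; subst n => a b; rewrite !liftto_refl.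
case: (ltngtP n m.+1) => // [lt _|<- _] a b; last by rewrite !liftto_refl.
by rewrite !liftto_S // => /(push_inj (l_n_inj m)) /IH; apply.
Qed.

Definition monotone_level n : Prop :=
  (forall x, validT k G n x -> validT k G n.+1 (l_n k G l n x)) /\
  (forall x y, validT k G n x -> validT k G n y -> lt_n k G n x y ->
     lt_n k G n.+1 (l_n k G l n x) (l_n k G l n y)).

Lemma l_n_monotone n : monotone_level n.
Proof.
have [hl1 [_ hl3]] := hl; elim: n => [|n [LV LM]].
  split; last by move=> x y _ _ /hl3.
  by move=> x _; have [A S] := hl1 x; split => // t /S.
have gt1 y : validT k G n y -> lt_n k G n (one_n k G n) y ->
    lt_n k G n.+1 (one_n k G n.+1) (l_n k G l n y).
  by move=> Vy ly; rewrite -l_n_one; apply: LM => //; apply: valid_one.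
split.
  move=> a [Aa Sa] /=; split.
    apply: (push_antiwo _ _ _ _ (l_n_inj n) LM _ _ Aa).
    by move=> x ax; case: (Sa x ax).
  move=> t /(push_ne0 (l_n_inj n)) [y [-> ay]]; have [Vy ly] := Sa y ay.
  by split; [exact: LV | exact: gt1].
move=> a b va vb lab /=.
have := push_spos (lt_n k G n) (lt_n k G n.+1) (validT k G n) (validT k G n.+1) (l_n k G l n)
  (l_n_inj n) LV LM a b (tower_order n) (tower_order n.+1) (@lt_n_irr _ _ n.+1).
apply; last exact: lab.
move=> y H; case: (classic (a y = 0)) => [e|/(proj2 va) [] //].
by apply: (proj1 (proj2 vb y _)) => e'; apply: H; rewrite e e' subrr.
Qed.

Lemma l_n_valid {n} {x} : validT k G n x -> validT k G n.+1 (l_n k G l n x).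
Proof. exact: (proj1 (l_n_monotone n)). Qed.

Lemma l_n_lt {n} {x y} : validT k G n x -> validT k G n y -> lt_n k G n x y ->
  lt_n k G n.+1 (l_n k G l n x) (l_n k G l n y).
Proof. exact: (proj2 (l_n_monotone n)). Qed.

End Embeddings.

Section PsiLevels.
Context {k : realFieldType} {G : oagroup}.
Variables (l : G -> G -> k) (psi : G -> G).
Hypothesis hl : prelog_section k G l.
Hypothesis hpsi : morphism_l k G l psi.

Lemma psi_n_inj n : injective (psi_n k G psi n).
Proof.
have [_ [hp2 _]] := hpsi; elim: n => [|n IH] /=; last exact: push_inj.
have lt_ne g h : olt G g h -> psi g <> psi h by move=> /hp2 lt E; rewrite E in lt; apply: olt_irr lt.
by move=> g h E; case: (@olt_total G g h) => [/lt_ne/(_ E)|[//|/lt_ne/(_ (esym E))]].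
Qed.

Lemma psi_l_comm n (z : Tn k G n) :
  psi_n k G psi n.+1 (l_n k G l n z) = l_n k G l n (psi_n k G psi n z).
Proof.
have [_ [_ hp3]] := hpsi; elim: n z => [|n IH] z.
  by apply: functional_extensionality => x /=; rewrite hp3.
rewrite /= (push_comp _ _ _ (psi_n_inj n.+1) (l_n_inj l hl n)).
rewrite (push_comp _ _ _ (l_n_inj l hl n) (psi_n_inj n)).
by congr push; apply: functional_extensionality => x; rewrite IH.
Qed.

Lemma liftto_psi n m (a : Tn k G n -> k) : (n <= m)%N ->
  liftto k G l n m (push k _ _ (psi_n k G psi n) a)
  = push k _ _ (psi_n k G psi m) (liftto k G l n m a).
Proof.
elim: m => [|m IH].
  by rewrite leqn0 => /eqP E; subst n; rewrite !liftto_refl.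
case: (ltngtP n m.+1) => // [lt _|<- _]; last by rewrite !liftto_refl.
rewrite !liftto_S // IH // (push_comp _ _ _ (l_n_inj l hl m) (psi_n_inj m)).
rewrite (push_comp _ _ _ (psi_n_inj m.+1) (l_n_inj l hl m)).
by congr push; apply: functional_extensionality => x; rewrite psi_l_comm.
Qed.

End PsiLevels.

Section ELEquality.
Context {k : realFieldType} {G : oagroup}.
Variable l : G -> G -> k.
Hypothesis hl : prelog_section k G l.

Lemma ELeq_intro {n n' : nat} m {a : Tn k G n -> k} {b : Tn k G n' -> k} :
  (n <= m)%N -> (n' <= m)%N -> liftto k G l n m a = liftto k G l n' m b ->
  ELeq k G l (existT _ n a) (existT _ n' b).
Proof. by move=> h1 h2 E; exists m; split => //; split => // t /=; rewrite E. Qed.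

Lemma ELeq_up {x y : EL k G} : ELeq k G l x y -> forall M, exists m, (M <= m)%N /\
  (projT1 x <= m)%N /\ (projT1 y <= m)%N /\
  liftto k G l _ m (projT2 x) = liftto k G l _ m (projT2 y).
Proof.
case=> m [h1 [h2 E]] M; exists (maxn m M); split; first exact: leq_maxr.
have hm := leq_maxl m M.
split; first exact: (leq_trans h1).
split; first exact: (leq_trans h2).
rewrite (liftto_trans _ _ h1 hm) (liftto_trans _ _ h2 hm).
by congr liftto; apply: functional_extensionality.
Qed.

Lemma ELeq_sym {x y : EL k G} : ELeq k G l x y -> ELeq k G l y x.
Proof. by case=> m [h1 [h2 E]]; exists m; split => //; split => // t; rewrite E. Qed.

Lemma ELeq_trans {x y z : EL k G} : ELeq k G l x y -> ELeq k G l y z -> ELeq k G l x z.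
Proof.
move=> H1 H2; have [m1 [_ [a1 [b1 E1]]]] := ELeq_up H1 0.
have [m2 [h [a2 [b2 E2]]]] := ELeq_up H2 m1.
exists m2; split; first exact: (leq_trans a1).
by split => // t; rewrite -E2 (liftto_trans _ _ a1 h) (liftto_trans _ _ b1 h) E1.
Qed.

(* Equal EL-series agree at every common level (lifts are injective). *)
Lemma ELeq_at {x y : EL k G} m : ELeq k G l x y ->
  (projT1 x <= m)%N -> (projT1 y <= m)%N ->
  liftto k G l _ m (projT2 x) = liftto k G l _ m (projT2 y).
Proof.
move=> H h1 h2; have [M [hM [a [b E]]]] := ELeq_up H m.
by apply: (liftto_inj l hl hM); rewrite -!liftto_trans.
Qed.

Variable psi : G -> G.
Hypothesis hpsi : morphism_l k G l psi.

Lemma ELpsi_eq {x y : EL k G} :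
  ELeq k G l x y -> ELeq k G l (ELpsi k G psi x) (ELpsi k G psi y).
Proof.
move=> H; have [m [_ [a [b E]]]] := ELeq_up H 0.
by exists m; split => //; split => // t /=; rewrite !liftto_psi // E.
Qed.

Lemma ELpsi_inj {x y : EL k G} :
  ELeq k G l (ELpsi k G psi x) (ELpsi k G psi y) -> ELeq k G l x y.
Proof.
move=> H; have [m [_ [a [b E]]]] := ELeq_up H 0.
exists m; split => //; split => // t; move: E.
by rewrite /= !liftto_psi // => /(push_inj (psi_n_inj _ _ hpsi m)) ->.
Qed.

End ELEquality.

Section LogOfField.
Context {k : realFieldType} (logk : k -> k).
Hypothesis hlog : is_log k logk.

Lemma log1 : logk 1 = 0.
Proof.
have [hmul _] := hlog; have := hmul 1 1 ltr01 ltr01.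
by rewrite mulr1 => /(congr1 (fun t => t - logk 1)); rewrite subrr addrK.
Qed.

Lemma log_eq0 a : 0 < a -> logk a = 0 -> a = 1.
Proof.
have [_ [hlt _]] := hlog; move=> a0 la.
case: (ltrgtP a 1) => // h; first by have := hlt _ _ a0 h; rewrite la log1 ltxx.
by have := hlt _ _ ltr01 h; rewrite la log1 ltxx.
Qed.

End LogOfField.

Section LogarithmParts.
Context {k : realFieldType} {T : Type}.

(* eps, where a = a(g) g (1 + eps) and g is the leading monomial of a *)
Definition log_eps (mul : T -> T -> T) (one g : T) (a : T -> k) : T -> k :=
  fun x => if excluded_middle_informative (x = one) then 0 else a (mul g x) / a g.

Definition log_tail (mul : T -> T -> T) (one : T) (eps : T -> k) : T -> k :=
  ssum k T (fun i y => ((-1) ^+ i / i.+1%:R) * spow k T mul one eps i.+1 y).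

Lemma slogE logk lt mul one (lT : T -> T -> k) (a : T -> k) x :
  let g := lead k T lt one a in
  slog k logk T lt mul one lT a x
  = lT g x + logk (a g) * mono k T one x + log_tail mul one (log_eps mul one g a) x.
Proof. by []. Qed.

Lemma lead_top (lt : T -> T -> Prop) (W : T -> Prop) (one : T) (a : T -> k) g0 :
  strict_total_on W lt -> (forall x, a x <> 0 -> W x) ->
  a g0 <> 0 -> (forall x, lt g0 x -> a x = 0) -> lead k T lt one a = g0.
Proof.
move=> [_ to] Wa ag0 top; rewrite /lead; case: excluded_middle_informative => [H|H]; last first.
  by case: H; exists g0.
case: (constructive_indefinite_description _ H) => g [ag gtop] /=.
apply: NNPP => ne; case: (to g g0 (Wa _ ag) (Wa _ ag0) ne) => lt_g.
  by apply: ag0; apply: gtop.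
by apply: ag; apply: top.
Qed.

(* Log of a monomial g is l(g): its coefficient is 1 and eps = 0. *)
Lemma slog_mono logk lt mul one (lT : T -> T -> k) (g : T) x :
  is_log k logk -> (forall x, ~ lt x x) -> (forall x, mul g x = g -> x = one) ->
  slog k logk T lt mul one lT (mono k T g) x = lT g x.
Proof.
move=> hlog irr cancel.
have lead_g : lead k T lt one (mono k T g) = g.
  apply: (lead_top lt (fun x => x = g)).
  - by split => [u v w -> -> -> /irr|u v -> ->].
  - exact: mono_ne0.
  - exact: mono_self_ne0.
  - by move=> y lgy; apply: mono_neq => e; rewrite e in lgy; case: (irr g lgy).
have eps0 y : log_eps mul one g (mono k T g) y = 0.
  rewrite /log_eps; case: excluded_middle_informative => // ne.
  by rewrite mono_neq ?mul0r // => /cancel.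
rewrite slogE lead_g mono_eq log1 // mul0r addr0 /log_tail /ssum fsum0 ?addr0 // => i.
by rewrite spow_zero ?mulr0.
Qed.

End LogarithmParts.

(* Write y = a g0 (1 + eps).  All monomials of eps and of the tail
   sum_i (-1)^(i-1) eps^i / i are < 1, whereas those of l^{#n}(g0) and of M are > 1;
   comparing coefficients at 1 gives log a = 0, below 1 gives tail = 0, and the
   leading coefficient of the tail is that of eps, so eps = 0. *)
Section LogUniqueness.
Context {k : realFieldType} {G : oagroup}.
Variables (l : G -> G -> k) (logk : k -> k) (n : nat).
Hypotheses (hlog : is_log k logk) (hl : prelog_section k G l).

Local Notation T := (Tn k G n).
Local Notation mulT := (mul_n k G n).
Local Notation oneT := (one_n k G n).
Local Notation ltT := (lt_n k G n).
Local Notation VT := (validT k G n).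

Variables (y : T -> k) (g0 : T).
Hypothesis y_valid : series_in k T ltT VT y.
Hypothesis y_g0 : 0 < y g0.
Hypothesis y_top : forall x, ltT g0 x -> y x = 0.

Local Notation eps := (log_eps mulT oneT g0 y).
Local Notation tail := (log_tail mulT oneT eps).

Lemma y_g0_ne0 : y g0 <> 0.
Proof. by move=> e; move: y_g0; rewrite e ltxx. Qed.

Lemma valid_g0 : VT g0.
Proof. exact: (proj2 y_valid _ y_g0_ne0). Qed.

Lemma lead_y : lead k T ltT oneT y = g0.
Proof. exact: (lead_top _ _ _ _ _ (tower_order n) (proj2 y_valid) y_g0_ne0 y_top). Qed.

Lemma eps_supp {x} : eps x <> 0 -> VT x /\ ltT x oneT.
Proof.
rewrite /log_eps; case: excluded_middle_informative => // nx ex.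
have yx : y (mulT g0 x) <> 0 by move=> e; apply: ex; rewrite e mul0r.
have Vgx := proj2 y_valid _ yx.
have Vx : VT x by rewrite -(mul_nK g0 x); apply: valid_mul => //; apply: valid_inv; apply: valid_g0.
split => //; have ne : mulT g0 x <> g0 by move=> /mul_n_eqg.
case: (lt_n_total Vgx valid_g0 ne) => lt; last by case: yx; apply: y_top.
by apply: (lt_n_mul_lK g0); rewrite mul_n1.
Qed.

(* supp eps is a translate of a subset of supp y. *)
Lemma eps_antiwo : antiwo T ltT (supp k T eps).
Proof.
move=> X HX [x0 Xx0].
pose Y z := exists x, X x /\ z = mulT g0 x.
have sub z : Y z -> supp k T y z.
  move=> [x [Xx ->]] e; apply: (HX x Xx); rewrite /log_eps.
  by case: excluded_middle_informative => // ?; rewrite e mul0r.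
have [_ [[x1 [Xx1 ->]] M0]] := proj1 y_valid Y sub (ex_intro _ _ (ex_intro _ x0 (conj Xx0 erefl))).
exists x1; split => // x Xx.
case: (M0 (mulT g0 x) (ex_intro _ x (conj Xx erefl))) => [/mul_n_inj|lt]; first by left.
by right; apply: (lt_n_mul_lK g0).
Qed.

Lemma eps_pow_supp {j z} : spow k T mulT oneT eps j.+1 z <> 0 -> VT z /\ ltT z oneT.
Proof.
elim: j z => [|j IH] z /smul_ne0 [p1 [p2 [<- [h1 h2]]]].
  by rewrite (mono_ne0 _ _ h2) mul_n1; apply: eps_supp.
have [Vp1 l1] := eps_supp h1; have [Vp2 l2] := IH _ h2.
split; first exact: valid_mul.
apply: (lt_n_trans (valid_mul Vp1 Vp2) Vp1 valid_one _ l1).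
by rewrite -{2}(mul_n1 p1); apply: lt_n_mul_l.
Qed.

Lemma tail_supp z : tail z <> 0 -> VT z /\ ltT z oneT.
Proof.
move=> /ssum_ne0 [i hi]; apply: (@eps_pow_supp i) => e.
by apply: hi; rewrite e mulr0.
Qed.

(* The leading term of the tail is that of eps (the powers eps^i, i >= 2, are smaller). *)
Lemma tail_lead v : eps v <> 0 -> (forall x, eps x <> 0 -> x = v \/ ltT x v) -> tail v = eps v.
Proof.
move=> ev Mv; have [Vv lv] := eps_supp ev.
have pow_below j z : spow k T mulT oneT eps j.+2 z <> 0 -> ltT z v.
  move=> /smul_ne0 [p1 [p2 [<- [h1 h2]]]].
  have [Vp1 _] := eps_supp h1; have [Vp2 l2] := eps_pow_supp h2.
  have lp : ltT (mulT p1 p2) p1 by rewrite -{2}(mul_n1 p1); apply: lt_n_mul_l.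
  case: (Mv _ h1) => [e|lt]; first by rewrite -e.
  exact: (lt_n_trans (valid_mul Vp1 Vp2) Vp1 Vv lp lt).
have pow1 : smul k T mulT eps (mono k T oneT) = eps by apply: smul_mono1r => x; apply: mul_n1.
rewrite /log_tail /ssum (fsum1 _ _ 0%N) /= ?expr0 ?pow1 ?divr1 ?mul1r // => -[|i] /=; split => //.
  by rewrite expr0 pow1 divr1 mul1r.
move=> h; exfalso; apply: h.
have pow_v0 : spow k T mulT oneT eps i.+2 v = 0 by apply: NNPP => /pow_below /lt_n_irr.
by move: pow_v0 => /= ->; rewrite mulr0.
Qed.

Variables (c : k) (M : T).
Hypotheses (M_valid : VT M) (M_gt1 : ltT oneT M).
Hypothesis y_log : forall x,
  slog k logk T ltT mulT oneT (l_n k G l n) y x = c * mono k T M x.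

Lemma log_decomp x :
  l_n k G l n g0 x + logk (y g0) * mono k T oneT x + tail x = c * mono k T M x.
Proof. by rewrite -y_log slogE lead_y. Qed.

Lemma l_g0_supp x : l_n k G l n g0 x <> 0 -> ltT oneT x.
Proof. by move=> /(proj2 (l_n_valid l hl valid_g0)) []. Qed.

Lemma lead_coef1 : y g0 = 1.
Proof.
apply: (log_eq0 logk hlog) => //.
have := log_decomp oneT.
have M_ne1 : oneT <> M by move=> e; move: M_gt1; rewrite -e; apply: lt_n_irr.
rewrite mono_eq mulr1 mono_neq //.
have -> : l_n k G l n g0 oneT = 0 by apply: NNPP => /l_g0_supp /lt_n_irr.
have -> : tail oneT = 0 by apply: NNPP => /tail_supp [_ /lt_n_irr].
by rewrite mulr0 add0r addr0.
Qed.

Lemma tail0 x : tail x = 0.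
Proof.
apply: NNPP => /[dup] tx /tail_supp [Vx lx]; apply: tx.
have := log_decomp x; rewrite lead_coef1 log1 // mul0r addr0.
have -> : l_n k G l n g0 x = 0.
  by apply: NNPP => /l_g0_supp lx'; exact: (lt_n_irr _ (lt_n_trans Vx valid_one Vx lx lx')).
rewrite add0r => ->; rewrite mono_neq ?mulr0 // => e; rewrite e in lx.
exact: (lt_n_irr _ (lt_n_trans M_valid valid_one M_valid lx M_gt1)).
Qed.

Lemma eps0 x : eps x = 0.
Proof.
apply: NNPP => ex.
have [v [ev Mv]] := antiwo_max _ _ eps_antiwo (ex_intro _ x ex).
by apply: (ev); rewrite -(tail_lead _ ev Mv) tail0.
Qed.

Theorem log_monomial_term :
  (forall x, y x = mono k T g0 x) /\ (forall x, l_n k G l n g0 x = c * mono k T M x).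
Proof.
split=> [z|x]; last by rewrite -log_decomp lead_coef1 log1 // mul0r addr0 tail0 addr0.
case: (classic (z = g0)) => [->|nz]; first by rewrite mono_eq lead_coef1.
rewrite mono_neq //; set x := mulT (inv_n n g0) z.
have gx : mulT g0 x = z by rewrite /x mul_nA mul_nV mul_1n.
have := eps0 x; rewrite /log_eps lead_coef1 divr1 gx.
by case: excluded_middle_informative => // e; case: nz; rewrite -gx e mul_n1.
Qed.

End LogUniqueness.

Section ExpOfMonomials.
Context {k : realFieldType} {G : oagroup}.
Variables (l : G -> G -> k) (logk : k -> k).
Hypotheses (hlog : is_log k logk) (hl : prelog_section k G l).

Definition exp_mono (b : G -> k) : EL k G := existT _ 1%N (mono k (Tn k G 1) b).

Lemma liftto_smono (c : k) {m0 : G} : olt G (oone G) m0 -> forall m,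
  exists z, validT k G m z /\ lt_n k G m (one_n k G m) z /\
    liftto k G l 0 m (fun x => c * mono k _ m0 x) = (fun x => c * mono k _ z x).
Proof.
move=> lm0; elim=> [|m [z [Vz [lz E]]]]; first by exists m0; rewrite liftto_refl.
exists (l_n k G l m z); split; first exact: l_n_valid.
split; first by rewrite -(l_n_one l hl m); apply: l_n_lt => //; apply: valid_one.
by rewrite liftto_S // E push_smono //; apply: l_n_inj.
Qed.

Lemma liftto_exp_mono (b : G -> k) j :
  liftto k G l 1 j.+1 (mono k (Tn k G 1) b) = mono k (Tn k G j.+1) (liftto k G l 0 j b).
Proof.
elim: j => [|j IH]; first by rewrite !liftto_refl.
rewrite liftto_S // IH push_mono; last exact: l_n_inj.
by rewrite [liftto _ _ _ 0 j.+1 b]liftto_S.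
Qed.

Lemma exp_mono_spec (c : k) {m0 : G} : olt G (oone G) m0 ->
  let e := exp_mono (fun x => c * mono k _ m0 x) in
  ELvalid k G e /\ ELpos k G e /\
  ELeq k G l (ELLog k G l logk e) (ELof0 k G (fun x => c * mono k _ m0 x)).
Proof.
set b := (fun x => c * mono k _ m0 x) : G -> k; move=> lm0 /=.
have b_supp x : b x <> 0 -> x = m0 by apply: smono_ne0.
split.
  split; first by apply: (antiwo_single _ _ b) => x; apply: mono_ne0.
  move=> x hx; rewrite (mono_ne0 _ _ hx).
  split; first by apply: (antiwo_single _ _ m0) => y; apply: b_supp.
  by move=> y /b_supp ->.
split.
  exists b; split => /=; first by rewrite mono_eq ltr01.
  by move=> x lx; apply: mono_neq => e; rewrite e in lx; case: (@lt_n_irr _ _ 1 b lx).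
apply: (ELeq_intro _ 1%N) => //; rewrite liftto_refl liftto_S // liftto_refl.
apply: functional_extensionality => x; apply: slog_mono => //; first exact: lt_n_irr.
exact: mul_n_eqg.
Qed.

Lemma Log_eq_smono (c : k) (m0 : G) (y : EL k G) : olt G (oone G) m0 ->
  ELvalid k G y -> ELpos k G y ->
  ELeq k G l (ELLog k G l logk y) (ELof0 k G (fun x => c * mono k _ m0 x)) ->
  ELeq k G l y (exp_mono (fun x => c * mono k _ m0 x)).
Proof.
case: y => n a lm0 Va [g0 [pos_g0 top_g0]] Ea.
have E := ELeq_at l hl n Ea (leqnn n) (leq0n n); rewrite /= liftto_refl in E.
have [z [Vz [lz Ez]]] := liftto_smono c lm0 n.
have [a_mono l_g0] := log_monomial_term l logk n hlog hl _ _ Va pos_g0 top_g0 _ _ Vz lz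
  (fun x => ltac:(by rewrite E Ez)).
apply: (ELeq_intro _ n.+1) => //.
rewrite liftto_S // liftto_refl liftto_exp_mono.
have -> : a = mono k _ g0 by apply: functional_extensionality.
rewrite push_mono; last exact: l_n_inj.
by congr mono; apply: functional_extensionality => x; rewrite l_g0 Ez.
Qed.

Lemma ELExp_spec {b : EL k G} :
  (exists y, ELvalid k G y /\ ELpos k G y /\ ELeq k G l (ELLog k G l logk y) b) ->
  let x := ELExp k G l logk b in
  ELvalid k G x /\ ELpos k G x /\ ELeq k G l (ELLog k G l logk x) b.
Proof.
move=> H; rewrite /ELExp; case: excluded_middle_informative => [H'|//].
by case: (constructive_indefinite_description _ H').
Qed.

Lemma Exp_smono (c : k) {m0 : G} : olt G (oone G) m0 ->
  ELeq k G l (ELExp k G l logk (ELof0 k G (fun x => c * mono k _ m0 x)))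
             (exp_mono (fun x => c * mono k _ m0 x)).
Proof.
move=> lm0; have [Ve [Pe Le]] := exp_mono_spec c lm0.
have [Vx [Px Lx]] := ELExp_spec (ex_intro _ _ (conj Ve (conj Pe Le))).
exact: Log_eq_smono.
Qed.

End ExpOfMonomials.

Section MorphismFacts.
Context {k : realFieldType} {G : oagroup}.
Variables (l : G -> G -> k) (psi : G -> G).
Hypotheses (hl : prelog_section k G l) (hpsi : morphism_l k G l psi).

Lemma morph_one : psi (oone G) = oone G.
Proof.
have [hp1 _] := hpsi; have E := hp1 (oone G) (oone G); rewrite omul1 in E.
transitivity (omul G (omul G (oinv G (psi (oone G))) (psi (oone G))) (psi (oone G))).
  by rewrite omulV omul1.
by rewrite -omulA -E omulV.
Qed.

(* If psi(h) = l(h), then h > 1 and psi(h) > 1: l(h) lies in k((G^{>1})) and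
   psi is strictly increasing with psi(1) = 1. *)
Lemma comp_gt1 (h : G) : (forall x, mono k G (psi h) x = l h x) ->
  olt G (oone G) h /\ olt G (oone G) (psi h).
Proof.
move=> comp; have [hl1 _] := hl; have [_ [hp2 _]] := hpsi.
have psih_gt1 : olt G (oone G) (psi h).
  by apply: (proj2 (hl1 h)); rewrite -comp; apply: mono_self_ne0.
split => //; case: (@olt_total G (oone G) h) => [//|[e|lt]].
  by move: psih_gt1; rewrite -e morph_one => /olt_irr.
have := hp2 _ _ lt; rewrite morph_one => lt2.
by case: (olt_irr _ _ (olt_trans _ _ _ _ lt2 psih_gt1)).
Qed.

Lemma psi_exp_mono (c : k) (m : G) :
  ELpsi k G psi (exp_mono (fun x => c * mono k G m x))
  = exp_mono (fun x => c * mono k G (psi m) x).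
Proof.
rewrite /ELpsi /exp_mono /=; congr existT.
rewrite push_mono; last exact: (psi_n_inj _ _ hpsi 1).
by congr mono; rewrite /= push_smono //; apply: (psi_n_inj _ _ hpsi 0).
Qed.

End MorphismFacts.

Lemma scale_Log_mono {k : realFieldType} {G : oagroup} (l : G -> G -> k) (logk : k -> k)
  (c : k) (g m : G) : is_log k logk -> (forall x, l g x = mono k G m x) ->
  ELscale k G c (ELLog k G l logk (ELof0 k G (mono k G g))) = ELof0 k G (fun x => c * mono k G m x).
Proof.
move=> hlog lg; rewrite /ELscale /ELLog /ELof0; congr existT.
apply: functional_extensionality => x /=; rewrite -lg; congr (_ * _).
by apply: slog_mono => //; [exact: olt_irr | exact: (@mul_n_eqg _ _ 0)].
Qed.

Lemma ELmul_one_l {k : realFieldType} {G : oagroup} (l : G -> G -> k) (x : EL k G) :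
  prelog_section k G l -> ELeq k G l (ELmul k G l (ELof0 k G (mono k G (oone G))) x) x.
Proof.
move=> hl; case: x => n a; rewrite /ELmul /=.
have lift_one N : liftto k G l 0 N (mono k G (oone G)) = mono k (Tn k G N) (one_n k G N).
  elim: N => [|N IH]; first by rewrite liftto_refl.
  by rewrite liftto_S // IH push_mono ?l_n_one //; apply: l_n_inj.
apply: (ELeq_intro _ (maxn 0 n)) => //; first exact: leq_maxr.
by rewrite liftto_refl lift_one smul_mono1l //; apply: mul_1n.
Qed.

Lemma smono_series {k : realFieldType} {T : Type} (lt : T -> T -> Prop) (S : T -> Prop)
  (c : k) (m : T) : S m -> series_in k T lt S (fun x => c * mono k T m x).
Proof.
move=> Sm; split; first by apply: (antiwo_single _ _ m) => x; apply: smono_ne0.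
by move=> x cx; rewrite (smono_ne0 _ _ _ cx).
Qed.

Theorem lemma9 (k : realFieldType) (logk : k -> k) (G : oagroup)
  (l : G -> G -> k) (psi : G -> G) (H : G -> Prop)
  (hlog : is_log k logk) (hl : prelog_section k G l) (hpsi : morphism_l k G l psi)
  (hH : subgroup G H)
  (hComp : forall h, H h -> l_in_G k G l h -> forall x, mono k G (psi h) x = l h x) :
  forall (h : G) (c : k), H h -> l_in_G k G l h ->
    (* (1) psi^EL(Exp(c h)) = Exp(c Log h) *)
    ELeq k G l
      (ELpsi k G psi (ELExp k G l logk (ELof0 k G (fun x => c * mono k G h x))))
      (ELExp k G l logk (ELscale k G c (ELLog k G l logk (ELof0 k G (mono k G h))))) /\
    (* (2) if psi^EL is surjective, its preimage of Exp(c Log h) lies in H . Exp k((H^{>1})) *)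
    ((forall y : EL k G, ELvalid k G y ->
        exists x, ELvalid k G x /\ ELeq k G l (ELpsi k G psi x) y) ->
     forall x : EL k G, ELvalid k G x ->
       ELeq k G l (ELpsi k G psi x)
         (ELExp k G l logk (ELscale k G c (ELLog k G l logk (ELof0 k G (mono k G h))))) ->
       exists h', H h' /\ exists b : G -> k,
         series_in k G (olt G) (fun g => H g /\ olt G (oone G) g) b /\
         ELeq k G l x (ELmul k G l (ELof0 k G (mono k G h')) (ELExp k G l logk (ELof0 k G b)))).
Proof.
move=> h c Hh Hlh.
have comp := hComp h Hh Hlh.
have [h_gt1 psih_gt1] := comp_gt1 l psi hl hpsi h comp.
rewrite (scale_Log_mono l logk c h (psi h) hlog (fun x => esym (comp x))).
have Exp_h := Exp_smono l logk hlog hl c h_gt1.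
have Exp_psih := Exp_smono l logk hlog hl c psih_gt1.
have psi_e := psi_exp_mono l psi hpsi c h.
split.
  apply: (ELeq_trans l (ELpsi_eq l hl psi hpsi Exp_h)).
  by rewrite psi_e; apply: ELeq_sym.
move=> _ x _ Ex.
have x_e : ELeq k G l x (exp_mono (fun y => c * mono k G h y)).
  by apply: (ELpsi_inj l hl psi hpsi); rewrite psi_e; apply: (ELeq_trans l Ex).
exists (oone G); split; first exact: (proj1 hH).
exists (fun y => c * mono k G h y); split; first exact: smono_series.
apply: (ELeq_trans l x_e); apply: ELeq_sym.
exact: (ELeq_trans l (ELmul_one_l l _ hl) Exp_h).
Qed.
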